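(* In the curved-exam game described in the context, for every student $i$, every $x_i\in(\alpha_i,1]$ and every opponent profile $x_{-i}\in[0,1]^{n-1}$, we have $U_i(\alpha_i,x_{-i})>U_i(x_i,x_{-i})$; that is, every strategy in $(\alpha_i,1]$ is strictly dominated by $\alpha_i$.
   Context: The curved-exam game: fix $n\ge2$, abilities $\alpha_1,\dots,\alpha_n\in(0,1)$, target mean $m\in(0,1)$. Student $i$ chooses $x_i\in[0,1]$; $\bar x=\frac1n\sum_j x_j$, $\bar x_{-i}=\frac1{n-1}\sum_{j\ne i}x_j$. Grade $G_i(x)=x_i+\max(m-\bar x,0)=\max\big(m+\frac{n-1}{n}(x_i-\bar x_{-i}),x_i\big)$ (not truncated at 1); payoff $U_i(x)=G_i(x)^{\alpha_i}(1-x_i)^{1-\alpha_i}$. *)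

From mathcomp Require Import all_boot all_order all_algebra.
From mathcomp Require Import all_classical all_reals all_analysis.
Set Implicit Arguments. Unset Strict Implicit. Unset Printing Implicit Defensive.
Import Order.TTheory GRing.Theory Num.Theory.
Local Open Scope ring_scope.

Section Game.
Variables (R : realType) (n : nat).

Definition xbar (x : 'I_n -> R) : R := (\sum_(j < n) x j) / n%:R.

(* grade G_i(x) = x_i + max(m - xbar, 0)  (not truncated at 1) *)
Definition grade (m : R) (x : 'I_n -> R) (i : 'I_n) : R :=
  x i + Num.max (m - xbar x) 0.

(* payoff U_i(x) = G_i(x)^alpha_i (1 - x_i)^(1 - alpha_i), powR has 0 `^ a = 0 for a != 0 *)
Definition payoff (alpha : 'I_n -> R) (m : R) (x : 'I_n -> R) (i : 'I_n) : R :=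
  powR (grade m x i) (alpha i) * powR (1 - x i) (1 - alpha i).

Definition deviate (x : 'I_n -> R) (i : 'I_n) (y : R) : 'I_n -> R :=
  fun j => if j == i then y else x j.
End Game.

From mathcomp Require Import all_boot all_order all_algebra.
From mathcomp Require Import all_classical all_reals all_analysis.
From mathcomp Require Import lra.
Import Order.TTheory GRing.Theory Num.Theory.
Local Open Scope ring_scope.

(* Raising one's own score from [alpha_i] to [y] can only shrink the curve, so
   the grade grows at most by the factor [y / alpha_i], while the leisure term
   [1 - x_i] strictly shrinks.  The ratio of the two payoffs is the geometric
   mean of these two ratios with weights [alpha_i] and [1 - alpha_i].  Since
   [ln u <= u - 1], strictly for [u <> 1], it is below the arithmetic mean with
   the same weights, which is at most [alpha_i (y / alpha_i) + (1 - y) = 1]. *)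

Section LnPowR.
Variable R : realType.

Lemma ln_le_subr1 (u : R) : 0 < u -> ln u <= u - 1.
Proof.
by move=> u0; rewrite -{1}(subrKC 1 u); apply: le_ln1Dx; lra.
Qed.

Lemma ln_lt_subr1 (u : R) : 0 < u -> u != 1 -> ln u < u - 1.
Proof.
move=> u0 u1; rewrite ltrBrDl -{2}(lnK u0) expR_gt1Dx //.
by rewrite ln_eq0.
Qed.

Lemma geomean2_lt1 (w u v : R) : 0 < w < 1 -> 0 < u -> 0 <= v < 1 ->
  w * u + (1 - w) * v <= 1 -> u `^ w * v `^ (1 - w) < 1.
Proof.
move=> /andP[w0 w1] u0 /andP[]; rewrite le_eqVlt => /predU1P[<- _ _|v0 v1 mean1].
  by rewrite powR0 ?mulr0 // subr_eq0 gt_eqF.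
rewrite /powR !gt_eqF // -expRD expR_lt1.
have lnu : ln u <= u - 1 by exact: ln_le_subr1.
have lnv : ln v < v - 1 by rewrite ln_lt_subr1 ?lt_eqF.
have w'0 : 0 < 1 - w by rewrite subr_gt0.
have : w * ln u <= w * (u - 1) by rewrite ler_wpM2l // ltW.
have : (1 - w) * ln v < (1 - w) * (v - 1) by rewrite ltr_pM2l.
lra.
Qed.

Lemma powR_weighted_lt (w P Q A B : R) : 0 < w < 1 -> 0 < P -> 0 <= Q < B ->
  0 < A -> w * (P / A) + (1 - w) * (Q / B) <= 1 ->
  P `^ w * Q `^ (1 - w) < A `^ w * B `^ (1 - w).
Proof.
move=> w01 P0 /andP[Q0 QB] A0 mean1.
have B0 : 0 < B by apply: le_lt_trans QB.
have u0 : 0 < P / A by rewrite divr_gt0.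
have /andP[v0 v1] : 0 <= Q / B < 1 by rewrite divr_ge0 ?ltr_pdivrMr ?mul1r // ltW.
rewrite -[P](divfK (lt0r_neq0 A0)) -[Q](divfK (lt0r_neq0 B0)).
rewrite (powRM w (ltW u0) (ltW A0)) (powRM _ v0 (ltW B0)) mulrACA.
rewrite -[ltRHS]mul1r ltr_pM2r ?mulr_gt0 ?powR_gt0 //.
by apply: geomean2_lt1; rewrite ?v0.
Qed.

End LnPowR.

Section CurvedExam.
Variables (R : realType) (n : nat) (m : R).
Implicit Types (x z : 'I_n -> R) (i : 'I_n) (y : R).

Definition curve x : R := Num.max (m - xbar x) 0.

Lemma curve_ge0 x : 0 <= curve x.
Proof. by rewrite le_max lexx orbT. Qed.

Lemma ler_xbar x z : (forall j, x j <= z j) -> xbar x <= xbar z.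
Proof. by move=> xz; rewrite ler_wpM2r ?invr_ge0 ?ler0n // ler_sum. Qed.

Lemma deviate_at x i y : deviate x i y i = y.
Proof. by rewrite /deviate eqxx. Qed.

Lemma grade_deviate x i y : grade m (deviate x i y) i = y + curve (deviate x i y).
Proof. by rewrite /grade deviate_at. Qed.

Lemma curve_deviate_le x i y1 y2 : y1 <= y2 ->
  curve (deviate x i y2) <= curve (deviate x i y1).
Proof.
move=> y12; apply: le_max2 => //; rewrite lerB //.
by apply: ler_xbar => j; rewrite /deviate; case: (j == i).
Qed.

Lemma mul_grade_deviate_le x i (a y : R) : 0 <= a <= y ->
  a * grade m (deviate x i y) i <= y * grade m (deviate x i a) i.
Proof.
move=> /andP[a0 ay]; rewrite !grade_deviate.
have dy0 := curve_ge0 (deviate x i y).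
have dyda : curve (deviate x i y) <= curve (deviate x i a).
  exact: curve_deviate_le.
move: dy0 dyda; set dy := curve _; set da := curve _ => dy0 dyda.
have : a * dy <= y * da by apply: ler_pM.
lra.
Qed.

End CurvedExam.

Theorem mainTheorem5 (R : realType) (n : nat) (alpha : 'I_n -> R) (m : R)
  (hn : (2 <= n)%N)
  (halpha : forall j, 0 < alpha j < 1)
  (hm : 0 < m < 1)
  (x : 'I_n -> R) (hx : forall j, 0 <= x j <= 1)
  (i : 'I_n) (y : R) (hy : alpha i < y <= 1) :
  payoff alpha m (deviate x i y) i < payoff alpha m (deviate x i (alpha i)) i.
Proof.
have /andP[a0 a1] := halpha i; have /andP[ay y1] := hy.
have grade_gt0 z : 0 < z -> 0 < grade m (deviate x i z) i.
  by move=> z0; rewrite grade_deviate ltr_wpDr ?curve_ge0.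
rewrite /payoff !deviate_at; set a := alpha i.
set Gy := grade m (deviate x i y) i; set Ga := grade m (deviate x i a) i.
apply: powR_weighted_lt.
- exact: halpha.
- exact: grade_gt0 (lt_trans a0 ay).
- by rewrite subr_ge0 y1 ltrD2l ltrN2.
- exact: grade_gt0.
have grade_ratio : a * (Gy / Ga) <= y.
  by rewrite mulrA ler_pdivrMr ?grade_gt0 ?mul_grade_deviate_le ?ltW.
have leisure_ratio : (1 - a) * ((1 - y) / (1 - a)) = 1 - y.
  by rewrite mulrC divfK // subr_eq0 gt_eqF.
lra.
Qed.
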